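(* Let $\mathcal{A}$ be an association scheme with splitting field $L$ and let $E\subseteq\mathbb{C}$ be a field containing $L$ that is closed under complex conjugation. A non-zero $E$-linear map $\psi:E[\mathcal{A}]\to E[\mathcal{A}]$ is a Bose–Mesner algebra automorphism of $E[\mathcal{A}]$ if and only if $(MN)^\psi=M^\psi N^\psi$ and $(M\circ N)^\psi=M^\psi\circ N^\psi$ for all $M,N\in E[\mathcal{A}]$.
   Context: An association scheme on $v$ vertices is a set $\mathcal{A}=\{A_0,\ldots,A_d\}$ of $v\times v$ $(0,1)$-matrices with $A_0=I$, $\sum_iA_i=J$, closed under transpose, pairwise commuting, and with all products $A_iA_j$ in the span of $\mathcal{A}$. Its principal idempotents $E_0,\ldots,E_d$ are the pairwise orthogonal Hermitian idempotents summing to $I$ that form a basis of the span, with $A_iE_j=p_i(j)E_j$; the splitting field $L$ is $\mathbb{Q}(p_i(j): i,j)$. $E[\mathcal{A}]$ is the $E$-span of $\mathcal{A}$ and $\circ$ is the Schur (entrywise) product. An $E$-linear map $\psi$ on $E[\mathcal{A}]$ is a Bose–Mesner algebra automorphism if for all $M,N\in E[\mathcal{A}]$: $(MN)^\psi=M^\psi N^\psi$, $(M\circ N)^\psi=M^\psi\circ N^\psi$, $\psi$ is invertible, and $(M^* )^\psi=(M^\psi)^*$ ($M^*$ the conjugate transpose). *)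

From HB Require Import structures.
From mathcomp Require Import all_boot all_order all_algebra.
Set Implicit Arguments. Unset Strict Implicit. Unset Printing Implicit Defensive.
Import Order.TTheory GRing.Theory Num.Theory.
Local Open Scope ring_scope.

Section Defs.
Variable C : numClosedFieldType.

Definition schur (v : nat) (M N : 'M[C]_v) : 'M[C]_v :=
  \matrix_(x, y) (M x y * N x y).

Definition ctrmx (v : nat) (M : 'M[C]_v) : 'M[C]_v := (map_mx Num.conj M)^T.

Definition is_assoc_scheme (v d : nat) (A : 'I_d.+1 -> 'M[C]_v) : Prop :=
  ((forall i x y, A i x y = 0 \/ A i x y = 1) /\
      (forall i, A i != 0) /\
      A ord0 = 1%:M /\
      \sum_(i < d.+1) A i = const_mx 1 /\
      (forall i, exists j, (A i)^T = A j) /\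
      (forall i j, A i *m A j = A j *m A i) /\
      (forall i j, exists c : 'I_d.+1 -> C, A i *m A j = \sum_(k < d.+1) c k *: A k)).

Definition principal_idempotents (v d : nat) (A : 'I_d.+1 -> 'M[C]_v)
    (Eid : 'I_d.+1 -> 'M[C]_v) (p : 'I_d.+1 -> 'I_d.+1 -> C) : Prop :=
  ((forall j, Eid j *m Eid j = Eid j) /\
      (forall j k, j != k -> Eid j *m Eid k = 0) /\
      (forall j, ctrmx (Eid j) = Eid j) /\
      \sum_(j < d.+1) Eid j = 1%:M /\
      (forall c : 'I_d.+1 -> C, \sum_(j < d.+1) c j *: Eid j = 0 -> forall j, c j = 0) /\
      (forall j, exists c : 'I_d.+1 -> C, Eid j = \sum_(k < d.+1) c k *: A k) /\
      (forall i, exists c : 'I_d.+1 -> C, A i = \sum_(k < d.+1) c k *: Eid k) /\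
      (forall i j, A i *m Eid j = p i j *: Eid j)).

Definition Espan (E : {pred C}) (v d : nat) (A : 'I_d.+1 -> 'M[C]_v) (M : 'M[C]_v) : Prop :=
  exists c : 'I_d.+1 -> C, (forall k, c k \in E) /\ M = \sum_(k < d.+1) c k *: A k.

Definition Elinear_on (E : {pred C}) (v d : nat) (A : 'I_d.+1 -> 'M[C]_v)
    (psi : 'M[C]_v -> 'M[C]_v) : Prop :=
  ((forall M, Espan E A M -> Espan E A (psi M)) /\
      (forall M N, Espan E A M -> Espan E A N -> psi (M + N) = psi M + psi N) /\
      (forall a M, a \in E -> Espan E A M -> psi (a *: M) = a *: psi M)).

Definition BMA_automorphism (E : {pred C}) (v d : nat) (A : 'I_d.+1 -> 'M[C]_v)
    (psi : 'M[C]_v -> 'M[C]_v) : Prop :=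
  ((forall M N, Espan E A M -> Espan E A N -> psi (M *m N) = psi M *m psi N) /\
      (forall M N, Espan E A M -> Espan E A N -> psi (schur M N) = schur (psi M) (psi N)) /\
      (forall M N, Espan E A M -> Espan E A N -> psi M = psi N -> M = N) /\
      (forall N, Espan E A N -> exists2 M, Espan E A M & psi M = N) /\
      (forall M, Espan E A M -> psi (ctrmx M) = ctrmx (psi M))).

End Defs.

From HB Require Import structures.
From mathcomp Require Import all_boot all_order all_algebra.
Set Implicit Arguments. Unset Strict Implicit. Unset Printing Implicit Defensive.
Import Order.TTheory GRing.Theory Num.Theory.
Local Open Scope ring_scope.

(* The A_k are 0/1 matrices partitioning J, so the Schur product acts
   coordinatewise in the basis (A_k) and psi(A_k), being a Schur idempotent,
   is a 0/1-combination of the A_k; distinct A_k go to Schur-orthogonal ones.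
   psi is injective: if psi M = 0, Schur-multiplying M by a suitable A_k shows
   psi(A_k) = 0, hence psi(A_k A_k^T) = 0; the A_0-coordinate of A_k A_k^T is
   nonzero, which forces psi(A_0) = psi(I) = 0 and so psi = 0. Therefore psi
   permutes the A_k and fixes A_0. It then preserves A_0-coordinates, and the
   A_0-coordinate of A_a A_b is nonzero exactly when A_b = A_a^T, so psi
   commutes with transposition; conjugation only acts on the coefficients,
   which stay in E. *)

Lemma ctrmx_sum (C : numClosedFieldType) (v n : nat) (c : 'I_n -> C) (B : 'I_n -> 'M[C]_v) :
  ctrmx (\sum_(k < n) c k *: B k) = \sum_(k < n) (c k)^* *: ctrmx (B k).
Proof.
apply/matrixP => x y; rewrite !mxE summxE rmorph_sum summxE; apply: eq_bigr => k _.
by rewrite !mxE rmorphM.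
Qed.

Section SchemeBasics.
Variables (C : numClosedFieldType) (v d : nat) (A : 'I_d.+1 -> 'M[C]_v).
Hypothesis hA : is_assoc_scheme A.

Lemma scheme_entry01 k x y : A k x y = 0 \/ A k x y = 1.
Proof. by case: hA => h _; apply: h. Qed.

Lemma scheme_entry_ge0 k x y : 0 <= A k x y.
Proof. by case: (scheme_entry01 k x y) => ->; rewrite ?ler01. Qed.

Lemma scheme_id : A ord0 = 1%:M.
Proof. by case: hA => _ [_ [h _]]. Qed.

Lemma scheme_tr k : exists j, (A k)^T = A j.
Proof. by case: hA => _ [_ [_ [_ [h _]]]]. Qed.

Lemma scheme_mul k l : exists c : 'I_d.+1 -> C, A k *m A l = \sum_(m < d.+1) c m *: A m.
Proof. by case: hA => _ [_ [_ [_ [_ [_ h]]]]]. Qed.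

Lemma sum_scheme_entry x y : \sum_(k < d.+1) A k x y = 1.
Proof. by case: hA => _ [_ [_ [hs _]]]; rewrite -summxE hs mxE. Qed.

Lemma scheme_entry_excl k l x y : k != l -> A k x y = 1 -> A l x y = 0.
Proof.
move=> nkl hk; case: (scheme_entry01 l x y) => // hl; exfalso.
have := sum_scheme_entry x y; rewrite (bigD1 k) //= (bigD1 l) 1?eq_sym //= hk hl.
have rest_ge0 : 0 <= \sum_(i < d.+1 | (i != k) && (i != l)) A i x y.
  by apply: sumr_ge0 => i _; apply: scheme_entry_ge0.
move=> /eqP; apply/negP; rewrite addrA -subr_eq0 addrAC addrK.
by apply: lt0r_neq0; rewrite ltr_pwDl.
Qed.

Lemma scheme_entry_cover x y : exists k, A k x y = 1.
Proof.
have [/existsP[k /eqP hk]|/existsPn h] := boolP [exists k, A k x y == 1].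
  by exists k.
have := sum_scheme_entry x y; rewrite big1 => [/eqP|k _].
  by rewrite eq_sym oner_eq0.
by case: (scheme_entry01 k x y) => // /eqP; rewrite (negbTE (h k)).
Qed.

Lemma scheme_support k : exists x y, A k x y = 1.
Proof.
case: hA => _ [hnz _].
have [/existsP[x /existsP[y /eqP h]]|/existsPn h] :=
  boolP [exists x, exists y, A k x y == 1]; first by exists x, y.
suff hk0 : A k = 0 by move: (hnz k); rewrite hk0 eqxx.
apply/matrixP => x y; rewrite mxE; case: (scheme_entry01 k x y) => // h1.
by move: (h x) => /existsPn /(_ y); rewrite h1 eqxx.
Qed.

Lemma scheme_sum_entry (c : 'I_d.+1 -> C) k x y : A k x y = 1 ->
  (\sum_(l < d.+1) c l *: A l) x y = c k.
Proof.
move=> hk; rewrite summxE (bigD1 k) //= big1 => [|l hl].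
  by rewrite mxE hk mulr1 addr0.
by rewrite mxE (scheme_entry_excl _ hk) ?mulr0 // eq_sym.
Qed.

Lemma schur_scheme_sum (a b : 'I_d.+1 -> C) :
  schur (\sum_(l < d.+1) a l *: A l) (\sum_(l < d.+1) b l *: A l) =
  \sum_(l < d.+1) (a l * b l) *: A l.
Proof.
apply/matrixP => x y; have [k hk] := scheme_entry_cover x y.
by rewrite mxE !(scheme_sum_entry _ hk).
Qed.

Lemma ctrmx_scheme k : ctrmx (A k) = (A k)^T.
Proof.
apply/matrixP => x y; rewrite !mxE.
by case: (scheme_entry01 k y x) => ->; rewrite ?conjC0 ?conjC1.
Qed.

Lemma schur_scheme_id k : schur (A k) (A k) = A k.
Proof.
apply/matrixP => x y; rewrite mxE.
by case: (scheme_entry01 k x y) => ->; rewrite ?mulr0 ?mulr1.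
Qed.

Lemma schur_scheme_orth k l : k != l -> schur (A k) (A l) = 0.
Proof.
move=> nkl; apply/matrixP => x y; rewrite !mxE.
case: (scheme_entry01 k x y) => h; first by rewrite h mul0r.
by rewrite (scheme_entry_excl nkl h) mulr0.
Qed.

Lemma schur_scheme_sumr k (c : 'I_d.+1 -> C) :
  schur (A k) (\sum_(l < d.+1) c l *: A l) = c k *: A k.
Proof.
apply/matrixP => x y; have [l hl] := scheme_entry_cover x y.
rewrite !mxE (scheme_sum_entry _ hl); have [->|nkl] := eqVneq k l.
  by rewrite hl mul1r mulr1.
by rewrite (scheme_entry_excl _ hl) ?mul0r ?mulr0 // eq_sym.
Qed.

(* The coordinate of M on A_k, read off an entry where A_k is 1 (junk 0 if none). *)
Definition sch_coord (M : 'M[C]_v) (k : 'I_d.+1) : C :=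
  if [pick xy : 'I_v * 'I_v | A k xy.1 xy.2 == 1] is Some xy then M xy.1 xy.2 else 0.

Lemma sch_coord_sum (c : 'I_d.+1 -> C) k : sch_coord (\sum_(l < d.+1) c l *: A l) k = c k.
Proof.
rewrite /sch_coord; case: pickP => [xy /eqP h|h]; first by rewrite (scheme_sum_entry _ h).
by have [x [y hk]] := scheme_support k; move: (h (x, y)); rewrite /= hk eqxx.
Qed.

Lemma sch_coordZ c k : sch_coord (c *: A k) k = c.
Proof.
rewrite /sch_coord; case: pickP => [xy /eqP h|h]; first by rewrite mxE h mulr1.
by have [x [y hk]] := scheme_support k; move: (h (x, y)); rewrite /= hk eqxx.
Qed.

Lemma sch_coord0 k : sch_coord 0 k = 0.
Proof. by rewrite /sch_coord; case: pickP => // xy _; rewrite mxE. Qed.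

(* Every diagonal entry of A_a A_b equals its A_0-coordinate, and (A_a A_b)(x, x)
   counts the z with A_a(x, z) = A_b(z, x) = 1. *)
Lemma sch_coord0_mul a a' b : (A a)^T = A a' ->
  (sch_coord (A a *m A b) ord0 != 0) = (b == a').
Proof.
move=> ha; have [c hc] := scheme_mul a b; rewrite hc sch_coord_sum.
have [x [y hxy]] := scheme_support a.
have hxx : A ord0 x x = 1 by rewrite scheme_id mxE eqxx.
rewrite -(scheme_sum_entry c hxx) -hc mxE.
have entryT z : A a x z = A a' z x by rewrite -ha mxE.
have [->|nba] := eqVneq b a'.
  apply: lt0r_neq0; rewrite (bigD1 y) //= -entryT hxy mulr1.
  apply: (lt_le_trans ltr01); rewrite lerDl; apply: sumr_ge0 => z _.
  by rewrite entryT; case: (scheme_entry01 a' z x) => ->; rewrite ?mulr0 ?mulr1.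
apply/negbTE; rewrite negbK big1 // => z _; rewrite entryT.
case: (scheme_entry01 a' z x) => h; first by rewrite h mul0r.
by rewrite (@scheme_entry_excl a' b _ _ _ h) ?mulr0 // eq_sym.
Qed.

End SchemeBasics.

Section Span.
Variables (C : numClosedFieldType) (v d : nat) (A : 'I_d.+1 -> 'M[C]_v).
Hypothesis hA : is_assoc_scheme A.
Variable E : divringClosed C.

Lemma EspanE M : Espan E A M -> M = \sum_(k < d.+1) sch_coord A M k *: A k.
Proof.
by case=> c [_ ->]; apply: eq_bigr => k _; rewrite sch_coord_sum.
Qed.

Lemma Espan_coord M k : Espan E A M -> sch_coord A M k \in E.
Proof. by case=> c [hc ->]; rewrite sch_coord_sum. Qed.

Lemma Espan_sum (c : 'I_d.+1 -> C) : (forall k, c k \in E) ->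
  Espan E A (\sum_(k < d.+1) c k *: A k).
Proof. by move=> h; exists c. Qed.

Lemma schur_scheme_coord k M : Espan E A M -> schur (A k) M = sch_coord A M k *: A k.
Proof. by move=> /EspanE {1}->; rewrite schur_scheme_sumr. Qed.

Lemma Espan0 : Espan E A 0.
Proof.
by exists (fun=> 0); split=> [k|]; rewrite ?rpred0 // big1 // => k _; rewrite scale0r.
Qed.

Lemma Espan_scheme k : Espan E A (A k).
Proof.
exists (fun l => (l == k)%:R); split=> [l|]; first by case: (l == k); rewrite ?rpred0 ?rpred1.
rewrite (bigD1 k) //= big1 => [|l /negbTE ->]; first by rewrite eqxx scale1r addr0.
by rewrite scale0r.
Qed.

Lemma EspanD M N : Espan E A M -> Espan E A N -> Espan E A (M + N).
Proof.
move=> [a [ha ->]] [b [hb ->]]; exists (fun k => a k + b k); split.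
  by move=> k; rewrite rpredD.
by rewrite -big_split /=; apply: eq_bigr => k _; rewrite scalerDl.
Qed.

Lemma EspanZ a M : a \in E -> Espan E A M -> Espan E A (a *: M).
Proof.
move=> hE [b [hb ->]]; exists (fun k => a * b k); split.
  by move=> k; rewrite rpredM.
by rewrite scaler_sumr; apply: eq_bigr => k _; rewrite scalerA.
Qed.

Lemma EspanB M N : Espan E A M -> Espan E A N -> Espan E A (M - N).
Proof.
by move=> hM hN; rewrite -scaleN1r; apply/EspanD/EspanZ; rewrite ?rpredN ?rpred1.
Qed.

Lemma Espan_scheme_tr k : Espan E A (A k)^T.
Proof. by have [j ->] := scheme_tr hA k; apply: Espan_scheme. Qed.

(* The structure constants of A_k A_l are entries of that product, hence in E. *)
Lemma Espan_scheme_mul k l : Espan E A (A k *m A l).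
Proof.
have [c hc] := scheme_mul hA k l; exists c; split=> // m.
have [x [y hm]] := scheme_support hA m; rewrite -(scheme_sum_entry hA c hm) -hc mxE.
have entryE i a b : A i a b \in E.
  by case: (scheme_entry01 hA i a b) => ->; rewrite ?rpred0 ?rpred1.
by apply: rpred_sum => z _; rewrite rpredM.
Qed.

End Span.

Section Morphism.
Variables (C : numClosedFieldType) (v d : nat) (A : 'I_d.+1 -> 'M[C]_v).
Hypothesis hA : is_assoc_scheme A.
Variable E : divringClosed C.
Variable psi : 'M[C]_v -> 'M[C]_v.
Hypothesis psi_lin : Elinear_on E A psi.
Hypothesis psiM : forall M N, Espan E A M -> Espan E A N -> psi (M *m N) = psi M *m psi N.
Hypothesis psi_schur :
  forall M N, Espan E A M -> Espan E A N -> psi (schur M N) = schur (psi M) (psi N).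
Hypothesis psi_neq0 : exists2 M, Espan E A M & psi M != 0.

Let EA k : Espan E A (A k) := Espan_scheme A E k.

Lemma psi_Espan M : Espan E A M -> Espan E A (psi M).
Proof. by case: psi_lin => h _; apply: h. Qed.

Lemma psiD M N : Espan E A M -> Espan E A N -> psi (M + N) = psi M + psi N.
Proof. by case: psi_lin => _ [h _]; apply: h. Qed.

Lemma psiZ a M : a \in E -> Espan E A M -> psi (a *: M) = a *: psi M.
Proof. by case: psi_lin => _ [_ h]; apply: h. Qed.

Lemma psi0 : psi 0 = 0.
Proof. by rewrite -(scale0r (A ord0)) psiZ ?scale0r ?rpred0. Qed.

Lemma psiB M N : Espan E A M -> Espan E A N -> psi (M - N) = psi M - psi N.
Proof.
move=> hM hN; have hm1 : (-1 : C) \in E by rewrite rpredN rpred1.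
have hN1 : Espan E A (-1 *: N) by apply: EspanZ.
by rewrite -scaleN1r psiD // psiZ // scaleN1r.
Qed.

Lemma psi_sum (c : 'I_d.+1 -> C) (B : 'I_d.+1 -> 'M[C]_v) :
  (forall k, c k \in E) -> (forall k, Espan E A (B k)) ->
  psi (\sum_(k < d.+1) c k *: B k) = \sum_(k < d.+1) c k *: psi (B k).
Proof.
move=> hc hB.
suff [] : Espan E A (\sum_(k < d.+1) c k *: B k) /\
  psi (\sum_(k < d.+1) c k *: B k) = \sum_(k < d.+1) c k *: psi (B k) by [].
apply: (big_rec2 (fun M N => Espan E A M /\ psi M = N)).
  by split; [apply: Espan0 | rewrite psi0].
move=> k M N _ [hM <-]; have hk : Espan E A (c k *: B k) by apply: EspanZ.
by split; [apply: EspanD | rewrite psiD ?psiZ].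
Qed.

Lemma psi_scheme_id_neq0 : psi (A ord0) != 0.
Proof.
case: psi_neq0 => M hM; apply: contraNneq => h0.
by rewrite -(mul1mx M) -(scheme_id hA) psiM // h0 mul0mx.
Qed.

(* Schur-multiplying by A_k isolates the k-th coordinate of M. *)
Lemma psi_scheme_eq0 k M : Espan E A M -> psi M = 0 -> sch_coord A M k != 0 ->
  psi (A k) = 0.
Proof.
move=> hM hM0 hk; have := psi_schur (EA k) hM.
rewrite (schur_scheme_coord hA _ hM) hM0 psiZ ?(Espan_coord hA _ hM) //.
have -> : schur (psi (A k)) 0 = 0 by apply/matrixP => x y; rewrite !mxE mulr0.
by move/eqP; rewrite scaler_eq0 (negbTE hk) => /eqP.
Qed.

Lemma psi_ker M : Espan E A M -> psi M = 0 -> M = 0.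
Proof.
move=> hM hM0; apply/eqP/negPn/negP => nM.
have [k hk] : exists k, sch_coord A M k != 0.
  apply/existsP; apply: contraNT nM => /existsPn hall; rewrite (EspanE hA hM).
  by apply/eqP/big1 => k _; move/negPn/eqP: (hall k) => ->; rewrite scale0r.
have hk0 := psi_scheme_eq0 hM hM0 hk.
have [j hj] := scheme_tr hA k.
have hN0 : psi (A k *m A j) = 0 by rewrite psiM // hk0 mul0mx.
have hN : sch_coord A (A k *m A j) ord0 != 0 by rewrite (sch_coord0_mul hA _ hj).
have := psi_scheme_eq0 (Espan_scheme_mul hA E k j) hN0 hN.
by apply/eqP; apply: psi_scheme_id_neq0.
Qed.

Lemma psi_inj M N : Espan E A M -> Espan E A N -> psi M = psi N -> M = N.
Proof.
move=> hM hN h; apply/eqP; rewrite -subr_eq0; apply/eqP.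
by apply: psi_ker; [apply: EspanB | rewrite psiB // h subrr].
Qed.

Let psi_coord i k := sch_coord A (psi (A i)) k.

Lemma psi_schemeE i : psi (A i) = \sum_(k < d.+1) psi_coord i k *: A k.
Proof. by rewrite /psi_coord -(EspanE hA (psi_Espan (EA i))). Qed.

Lemma psi_coord01 i k : psi_coord i k = 0 \/ psi_coord i k = 1.
Proof.
have := psi_schur (EA i) (EA i).
rewrite schur_scheme_id ?psi_schemeE ?schur_scheme_sum // => /(congr1 (sch_coord A ^~ k)).
rewrite !sch_coord_sum // => /eqP; rewrite -subr_eq0 -{1}(mulr1 (psi_coord i k)) -mulrBr.
by rewrite mulf_eq0 subr_eq0 => /orP[] /eqP; auto.
Qed.

Lemma psi_coord_orth i j k : i != j -> psi_coord i k * psi_coord j k = 0.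
Proof.
move=> nij; have := psi_schur (EA i) (EA j).
rewrite schur_scheme_orth // psi0 !psi_schemeE schur_scheme_sum //.
by move=> /(congr1 (sch_coord A ^~ k)); rewrite sch_coord0 ?sch_coord_sum.
Qed.

Lemma psi_coord_support i : exists k, psi_coord i k = 1.
Proof.
suff /existsP[k /eqP hk] : [exists k, psi_coord i k == 1] by exists k.
apply: contraT => /existsPn hall.
have [_ [hAnz _]] := hA; move: (hAnz i); apply: contraNT => _.
apply/eqP/psi_ker; rewrite ?psi_schemeE ?big1 // => k _.
by case: (psi_coord01 i k) => h; [rewrite h scale0r | move: (hall k); rewrite h eqxx].
Qed.

Definition sigma i := odflt i [pick k | psi_coord i k == 1].

Lemma psi_coord_sigma i : psi_coord i (sigma i) = 1.
Proof.
rewrite /sigma; case: pickP => [k /eqP //|h] /=.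
by have [k hk] := psi_coord_support i; move: (h k); rewrite hk eqxx.
Qed.

Lemma sigma_inj : injective sigma.
Proof.
move=> i j hij; apply/eqP/negPn/negP => nij.
have := psi_coord_orth (sigma i) nij; rewrite {2}hij !psi_coord_sigma mulr1.
by move/eqP; rewrite oner_eq0.
Qed.

Lemma psi_coord_eq1 i k : psi_coord i k = 1 -> k = sigma i.
Proof.
move=> hk; rewrite -(f_invF sigma_inj k); congr sigma.
apply/eqP/negPn/negP => nij; have := psi_coord_orth k nij.
by rewrite hk -{2}(f_invF sigma_inj k) psi_coord_sigma mulr1 => /eqP; rewrite oner_eq0.
Qed.

Lemma psi_scheme i : psi (A i) = A (sigma i).
Proof.
rewrite psi_schemeE (bigD1 (sigma i)) //= psi_coord_sigma scale1r big1 ?addr0 // => k hk.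
case: (psi_coord01 i k) => h; first by rewrite h scale0r.
by move: hk; rewrite (psi_coord_eq1 h) eqxx.
Qed.

Lemma psi_surj N : Espan E A N -> exists2 M, Espan E A M & psi M = N.
Proof.
move=> hN; exists (\sum_(k < d.+1) sch_coord A N (sigma k) *: A k).
  by apply: Espan_sum => k; apply: Espan_coord.
rewrite psi_sum // => [|k]; last exact: Espan_coord.
rewrite {2}(EspanE hA hN) [RHS](reindex_inj sigma_inj) /=.
by apply: eq_bigr => k _; rewrite psi_scheme.
Qed.

Lemma psi_scheme_id : psi (A ord0) = A ord0.
Proof.
have [M hM hM1] := psi_surj (EA ord0).
have := psiM (EA ord0) hM.
by rewrite scheme_id // mul1mx hM1 scheme_id // mulmx1.
Qed.

(* psi fixes A_0, and Schur-multiplying by A_0 extracts the A_0-coordinate. *)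
Lemma psi_coord0 M : Espan E A M -> sch_coord A (psi M) ord0 = sch_coord A M ord0.
Proof.
move=> hM; have := psi_schur (EA ord0) hM.
rewrite psi_scheme_id (schur_scheme_coord hA _ hM) (schur_scheme_coord hA _ (psi_Espan hM)).
rewrite psiZ ?(Espan_coord hA _ hM) // psi_scheme_id.
by move=> /(congr1 (sch_coord A ^~ ord0)); rewrite !sch_coordZ.
Qed.

Lemma sigma_tr k j : (A k)^T = A j -> (A (sigma k))^T = A (sigma j).
Proof.
move=> hj; have [l hl] := scheme_tr hA (sigma k); rewrite hl; congr A; apply/esym/eqP.
rewrite -(sch_coord0_mul hA _ hl) -!psi_scheme -psiM // psi_coord0.
  by rewrite (sch_coord0_mul hA _ hj).
exact: Espan_scheme_mul.
Qed.

Lemma psi_scheme_tr k : psi (A k)^T = (psi (A k))^T.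
Proof. by have [j hj] := scheme_tr hA k; rewrite hj !psi_scheme (sigma_tr hj). Qed.

Lemma psi_ctrmx : (forall x, x \in E -> x^* \in E) ->
  forall M, Espan E A M -> psi (ctrmx M) = ctrmx (psi M).
Proof.
move=> hconj M [c [hc ->]]; have hc' k : (c k)^* \in E by apply: hconj.
have hctr k : Espan E A (ctrmx (A k)) by rewrite ctrmx_scheme //; apply: Espan_scheme_tr.
rewrite ctrmx_sum !psi_sum // ctrmx_sum; apply: eq_bigr => k _.
by rewrite (ctrmx_scheme hA) psi_scheme_tr psi_scheme (ctrmx_scheme hA).
Qed.

Lemma BMA_automorphism_of_morphism : (forall x, x \in E -> x^* \in E) ->
  BMA_automorphism E A psi.
Proof.
move=> hconj; do ![split] => //; [exact: psi_inj | exact: psi_surj | exact: psi_ctrmx].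
Qed.

End Morphism.

Theorem theorem3p3 (C : numClosedFieldType) (v d : nat)
    (A : 'I_d.+1 -> 'M[C]_v) (Eid : 'I_d.+1 -> 'M[C]_v) (p : 'I_d.+1 -> 'I_d.+1 -> C)
    (E : divringClosed C) (psi : 'M[C]_v -> 'M[C]_v) :
  is_assoc_scheme A ->
  principal_idempotents A Eid p ->
  (forall i j, p i j \in E) ->
  (forall x, x \in E -> x^* \in E) ->
  Elinear_on E A psi ->
  (exists2 M, Espan E A M & psi M != 0) ->
  (BMA_automorphism E A psi <->
   (forall M N, Espan E A M -> Espan E A N -> psi (M *m N) = psi M *m psi N) /\
   (forall M N, Espan E A M -> Espan E A N -> psi (schur M N) = schur (psi M) (psi N))).
Proof.
move=> hA _ _ hconj hlin hnz; split=> [[hmul [hsch _]] // | [hmul hsch]].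
exact: BMA_automorphism_of_morphism.
Qed.
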